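(* Let $\mathsf E=\{\mathsf E_x\}_{x\in\mathcal X}$ be a non-trivial observable on $\mathcal H_S$. Its Lüders instrument $\mathcal I^L_x(\rho)=\sqrt{\mathsf E_x}\,\rho\,\sqrt{\mathsf E_x}$ is implemented by some measurement scheme constrained by the third law if and only if $\mathsf E$ is completely unsharp.
   Context: All Hilbert spaces are finite-dimensional and complex. A state is a positive operator of unit trace; it is full-rank if it is positive definite. A channel is a completely positive trace-preserving linear map. A channel is constrained by the third law if it maps every full-rank state on its input space to a full-rank state on its output space. Let $2\le\dim\mathcal H_S<\infty$. An observable is a finite family $\mathsf E=\{\mathsf E_x\}_{x\in\mathcal X}$ of nonzero operators with $0\le\mathsf E_x\le\mathbb 1$ and $\sum_x\mathsf E_x=\mathbb 1$. It is non-trivial if some $\mathsf E_x$ is not a multiple of $\mathbb 1$. It is completely unsharp if, for every $x$, the spectrum of $\mathsf E_x$ contains neither $0$ nor $1$. A measurement scheme $(\mathcal H_A,\xi,\mathcal E,\mathsf Z)$ consists of: - a finite-dimensional $\mathcal H_A$; - a state $\xi$ on $\mathcal H_A$; - a channel $\mathcal E$ on $\mathcal L(\mathcal H_S\otimes\mathcal H_A)$; - positive operators $\{\mathsf Z_x\}_{x\in\mathcal X}$ on $\mathcal H_A$ summing to $\mathbb 1$. It implements $\mathcal I_x(\rho)=\mathrm{tr}_A[(\mathbb 1\otimes\mathsf Z_x)\mathcal E(\rho\otimes\xi)]$. It is constrained by the third law if $\xi$ is full-rank and $\mathcal E$ is constrained by the third law. *)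

From HB Require Import structures.
From mathcomp Require Import all_boot all_order all_algebra.
From mathcomp Require Import complex mxtens.
From mathcomp Require Import Rstruct.
From Stdlib Require Import ClassicalEpsilon.

Set Implicit Arguments.
Unset Strict Implicit.
Unset Printing Implicit Defensive.

Import Order.TTheory GRing.Theory Num.Theory.
Local Open Scope ring_scope.

Definition C : numClosedFieldType := (Rdefinitions.R)[i].

Definition adj {m n : nat} (A : 'M[C]_(m, n)) : 'M[C]_(n, m) :=
  (map_mx Num.conj A)^T.

Definition psd {n : nat} (A : 'M[C]_n) : Prop :=
  adj A = A /\ forall v : 'cV[C]_n, 0 <= (adj v *m A *m v) 0 0.

(* positive definite operator (= full-rank positive operator) *)
Definition posdef {n : nat} (A : 'M[C]_n) : Prop :=
  adj A = A /\ forall v : 'cV[C]_n, v != 0 -> 0 < (adj v *m A *m v) 0 0.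

Definition is_state {n : nat} (rho : 'M[C]_n) : Prop := psd rho /\ \tr rho = 1.

Definition full_rank_state {n : nat} (rho : 'M[C]_n) : Prop :=
  posdef rho /\ \tr rho = 1.

Definition is_linear_map {n m : nat} (f : 'M[C]_n -> 'M[C]_m) : Prop :=
  forall (a : C) (A B : 'M[C]_n), f (a *: A + B) = a *: f A + f B.

(* the ampliation id_k (x) f : L(C^k (x) H_n) -> L(C^k (x) H_m),
   with the tensor index convention of mxtens (first factor = C^k) *)
Definition ampliation (k : nat) {n m : nat} (f : 'M[C]_n -> 'M[C]_m)
  (X : 'M[C]_(k * n)) : 'M[C]_(k * m) :=
  \matrix_(i, j)
    (f (\matrix_(a, b) X (mxtens_index ((mxtens_unindex i).1, a))
                         (mxtens_index ((mxtens_unindex j).1, b))))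
      (mxtens_unindex i).2 (mxtens_unindex j).2.

Arguments ampliation k {n m} f X.

Definition completely_positive {n m : nat} (f : 'M[C]_n -> 'M[C]_m) : Prop :=
  forall (k : nat) (X : 'M[C]_(k * n)), psd X -> psd (ampliation k f X).

Definition trace_preserving {n m : nat} (f : 'M[C]_n -> 'M[C]_m) : Prop :=
  forall X : 'M[C]_n, \tr (f X) = \tr X.

Definition is_channel {n m : nat} (f : 'M[C]_n -> 'M[C]_m) : Prop :=
  [/\ is_linear_map f, completely_positive f & trace_preserving f].

Definition third_law_channel {n m : nat} (f : 'M[C]_n -> 'M[C]_m) : Prop :=
  is_channel f /\ forall rho : 'M[C]_n, full_rank_state rho -> full_rank_state (f rho).

(* partial trace over the second factor H_A of H_S (x) H_A *)
Definition ptrace2 {n m : nat} (Y : 'M[C]_(n * m)) : 'M[C]_n :=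
  \matrix_(i, j) \sum_(a < m) Y (mxtens_index (i, a)) (mxtens_index (j, a)).

Definition observable {X : finType} {n : nat} (E : X -> 'M[C]_n) : Prop :=
  [/\ forall x, E x != 0,
      forall x, psd (E x) /\ psd (1%:M - E x)
    & \sum_(x : X) E x = 1%:M].

Definition nontrivial_obs {X : finType} {n : nat} (E : X -> 'M[C]_n) : Prop :=
  exists x : X, forall c : C, E x != c%:M.

Definition completely_unsharp {X : finType} {n : nat} (E : X -> 'M[C]_n) : Prop :=
  forall x : X, ~~ eigenvalue (E x) 0 /\ ~~ eigenvalue (E x) 1.

Definition msqrt {n : nat} (A : 'M[C]_n) : 'M[C]_n :=
  epsilon (inhabits 0) (fun S : 'M[C]_n => psd S /\ S *m S = A).

Definition luders {X : finType} {n : nat} (E : X -> 'M[C]_n) (x : X)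
  (rho : 'M[C]_n) : 'M[C]_n :=
  msqrt (E x) *m rho *m msqrt (E x).

(* measurement schemes (H_A, xi, E, Z) with outcome set X, H_A = C^dimA *)
Record scheme (n : nat) (X : finType) := Scheme {
  dimA : nat;
  xi : 'M[C]_dimA;
  chan : 'M[C]_(n * dimA) -> 'M[C]_(n * dimA);
  Zp : X -> 'M[C]_dimA }.

Arguments dimA {n X} s.
Arguments xi {n X} s.
Arguments chan {n X} s _.
Arguments Zp {n X} s _.

Definition valid_scheme {n : nat} {X : finType} (S : scheme n X) : Prop :=
  [/\ is_state (xi S), is_channel (chan S),
      forall x, psd (Zp S x) & \sum_(x : X) Zp S x = 1%:M].

Definition third_law_scheme {n : nat} {X : finType} (S : scheme n X) : Prop :=
  [/\ valid_scheme S, full_rank_state (xi S) & third_law_channel (chan S)].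

Definition scheme_instrument {n : nat} {X : finType} (S : scheme n X) (x : X)
  (rho : 'M[C]_n) : 'M[C]_n :=
  ptrace2 ((1%:M *t Zp S x) *m chan S (rho *t xi S)).

Definition implements {n : nat} {X : finType} (S : scheme n X)
  (I : X -> 'M[C]_n -> 'M[C]_n) : Prop :=
  forall (x : X) (rho : 'M[C]_n), scheme_instrument S x rho = I x rho.

(* If every effect E_x is invertible, the Lueders instrument is realised with an
   ancilla C^X prepared in the maximally mixed state, pointer projections
   |x><x|, and the channel with Kraus operators sqrt(E_x) (x) |x><a|.  These
   Kraus operators have no common nonzero kernel vector, so the channel keeps
   full-rank states full rank.

   Conversely, feed the maximally mixed system state into a scheme constrained
   by the third law: the joint output sigma is positive definite, and for every
   nonzero pointer effect Z >= 0 the operator tr_A[(1 (x) Z) sigma] is positive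
   definite.  For Z = Z_x this operator is E_x / n, and for
   Z = 1 - Z_x = sum_{y <> x} Z_y it is (1 - E_x) / n; the latter Z is nonzero
   because a non-trivial observable has no effect equal to 1. *)

From Pilot Require Import Defs.
From HB Require Import structures.
From mathcomp Require Import all_boot all_order all_algebra.
From mathcomp Require Import complex mxtens.
From mathcomp Require Import spectral sesquilinear.
From mathcomp Require Import ring.
From Stdlib Require Import ClassicalEpsilon.

Set Implicit Arguments.
Unset Strict Implicit.
Unset Printing Implicit Defensive.
Import Order.TTheory GRing.Theory Num.Theory.
Local Open Scope ring_scope.

Lemma adjE m n (A : 'M[C]_(m, n)) i j : adj A i j = (A j i)^*.
Proof. by rewrite !mxE. Qed.

Lemma adjK m n (A : 'M[C]_(m, n)) : adj (adj A) = A.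
Proof. by apply/matrixP=> i j; rewrite !adjE conjCK. Qed.

Lemma adj_mul m n p (A : 'M[C]_(m, n)) (B : 'M[C]_(n, p)) :
  adj (A *m B) = adj B *m adj A.
Proof. by rewrite /adj map_mxM trmx_mul. Qed.

Lemma adjZ m n (a : C) (A : 'M[C]_(m, n)) : adj (a *: A) = a^* *: adj A.
Proof. by rewrite /adj map_mxZ linearZ. Qed.

Lemma adj_sum m n (I : finType) (P : pred I) (F : I -> 'M[C]_(m, n)) :
  adj (\sum_(i | P i) F i) = \sum_(i | P i) adj (F i).
Proof. by rewrite /adj map_mx_sum linear_sum. Qed.

Lemma adj_scalar n (a : C) : adj (a%:M : 'M[C]_n) = a^*%:M.
Proof. by apply/matrixP=> i j; rewrite adjE !mxE rmorphMn eq_sym. Qed.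

Lemma adj1 n : adj (1%:M : 'M[C]_n) = 1%:M.
Proof. by rewrite adj_scalar rmorph1. Qed.

Lemma adj_delta m n (i : 'I_m) (j : 'I_n) : adj (delta_mx i j) = delta_mx j i.
Proof. by apply/matrixP=> a b; rewrite adjE !mxE rmorph_nat andbC. Qed.

Lemma adj_tens m n p q (A : 'M[C]_(m, n)) (B : 'M[C]_(p, q)) :
  adj (A *t B) = adj A *t adj B.
Proof. by rewrite /adj map_mxT trmx_tens. Qed.

Lemma adj_eq0 m n (A : 'M[C]_(m, n)) : (adj A == 0) = (A == 0).
Proof.
apply/eqP/eqP=> [A0|->]; last by rewrite /adj map_mx0 trmx0.
by rewrite -[A]adjK A0 /adj map_mx0 trmx0.
Qed.

Definition qform n (A : 'M[C]_n) (v : 'cV[C]_n) : C := (adj v *m A *m v) 0 0.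

Lemma qformE n (A : 'M[C]_n) v :
  qform A v = \sum_j \sum_i (v i 0)^* * A i j * v j 0.
Proof.
rewrite /qform mxE; apply: eq_bigr => j _; rewrite mxE mulr_suml.
by apply: eq_bigr => i _; rewrite adjE.
Qed.

Lemma qform_conj m n (K : 'M[C]_(m, n)) (A : 'M[C]_m) (v : 'cV[C]_n) :
  qform (adj K *m A *m K) v = qform A (K *m v).
Proof. by rewrite /qform adj_mul !mulmxA. Qed.

Lemma qformZ n (a : C) (A : 'M[C]_n) v : qform (a *: A) v = a * qform A v.
Proof. by rewrite /qform -scalemxAr -scalemxAl mxE. Qed.

Lemma qform_sum n (I : finType) (P : pred I) (F : I -> 'M[C]_n) v :
  qform (\sum_(i | P i) F i) v = \sum_(i | P i) qform (F i) v.
Proof. by rewrite /qform mulmx_sumr mulmx_suml summxE. Qed.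

Lemma sqnormE n (v : 'cV[C]_n) : (adj v *m v) 0 0 = \sum_i v i 0 * (v i 0)^*.
Proof. by rewrite mxE; apply: eq_bigr => i _; rewrite adjE mulrC. Qed.

Lemma sqnorm_ge0 n (v : 'cV[C]_n) : 0 <= (adj v *m v) 0 0.
Proof. by rewrite sqnormE; apply: sumr_ge0 => i _; apply: mul_conjC_ge0. Qed.

Lemma sqnorm_eq0 n (v : 'cV[C]_n) : ((adj v *m v) 0 0 == 0) = (v == 0).
Proof.
apply/eqP/eqP=> [|->]; last by rewrite mulmx0 mxE.
rewrite sqnormE => /psumr_eq0P v0; apply/matrixP => i j; rewrite ord1 mxE.
by apply/eqP; rewrite -mul_conjC_eq0; apply/eqP/v0 => // k _; apply: mul_conjC_ge0.
Qed.

Lemma sqnorm_gt0 n (v : 'cV[C]_n) : (0 < (adj v *m v) 0 0) = (v != 0).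
Proof. by rewrite lt_def sqnorm_ge0 sqnorm_eq0 andbT. Qed.

Lemma psd_conj m n (K : 'M[C]_(m, n)) (A : 'M[C]_m) :
  psd A -> psd (adj K *m A *m K).
Proof.
case=> hA pA; split; first by rewrite !adj_mul adjK hA mulmxA.
by move=> v; rewrite -/(qform _ v) qform_conj; apply: pA.
Qed.

Lemma posdef_psd n (A : 'M[C]_n) : posdef A -> psd A.
Proof.
case=> hA pA; split=> // v; have [->|nz] := eqVneq v 0; last exact: ltW (pA v nz).
by rewrite mulmx0 mxE.
Qed.

Lemma psd_sum n (I : finType) (P : pred I) (F : I -> 'M[C]_n) :
  (forall i, P i -> psd (F i)) -> psd (\sum_(i | P i) F i).
Proof.
move=> pF; split; first by rewrite adj_sum; apply: eq_bigr => i /pF [].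
by move=> v; rewrite -/(qform _ v) qform_sum; apply: sumr_ge0 => i /pF [_]; apply.
Qed.

Lemma psd1 n : psd (1%:M : 'M[C]_n).
Proof. by split=> [|v]; rewrite ?adj1 // mulmx1 sqnorm_ge0. Qed.

Lemma psd_delta n (i : 'I_n) : psd (delta_mx i i : 'M[C]_n).
Proof.
rewrite -[delta_mx i i](mul_delta_mx (0 : 'I_1)) -adj_delta -[adj _]mulmx1.
exact/psd_conj/psd1.
Qed.

Lemma posdefZ n (c : C) (A : 'M[C]_n) : 0 < c -> posdef A -> posdef (c *: A).
Proof.
move=> c0 [hA pA]; split; first by rewrite adjZ hA conj_Creal // gtr0_real.
by move=> v nv; rewrite -/(qform _ v) qformZ mulr_gt0 ?pA.
Qed.

Lemma posdef_scalar n (c : C) : 0 < c -> posdef (c%:M : 'M[C]_n).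
Proof.
move=> c0; split=> [|v nv]; first by rewrite adj_scalar conj_Creal ?gtr0_real.
by rewrite mul_mx_scalar -scalemxAl mxE mulr_gt0 ?sqnorm_gt0.
Qed.

Lemma psd_diag n (d : 'rV[C]_n) : (forall i, 0 <= d 0 i) -> psd (diag_mx d).
Proof.
move=> d_ge0; split.
  apply/matrixP=> i j; rewrite adjE !mxE.
  have [<-|_] := eqVneq i j; first by rewrite !mulr1n conj_Creal ?ger0_real.
  by rewrite !mulr0n rmorph0.
move=> v; rewrite -/(qform _ v) qformE; apply: sumr_ge0 => j _.
rewrite (big_only1 j) // => [|i /negPf ij _]; last by rewrite !mxE ij mulr0n mulr0 mul0r.
by rewrite !mxE eqxx mulr1n mulrC mulrA mulr_ge0 ?mul_conjC_ge0.
Qed.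

Lemma qform_diag_delta n (d : 'rV[C]_n) i : qform (diag_mx d) (delta_mx i 0) = d 0 i.
Proof.
rewrite qformE (big_only1 i) // => [|j /negPf ij _]; last first.
  by rewrite big1 // => k _; rewrite !mxE ij !mulr0.
rewrite (big_only1 i) // => [|k /negPf ki _]; last by rewrite !mxE ki rmorph0 !mul0r.
by rewrite !mxE !eqxx mulr1n rmorph1 mul1r mulr1.
Qed.

(* Spectral theorem: [A = P^* diag(d) P] with [P] unitary and [d >= 0];
   take [P^* diag(sqrt d) P]. *)
Lemma psd_sqrt_exists n (A : 'M[C]_n) : psd A -> exists S : 'M[C]_n, psd S /\ S *m S = A.
Proof.
move=> psdA; have [hA _] := psdA.
have adjE_sesqui m p (B : 'M[C]_(m, p)) : adj B = (B ^t* )%sesqui.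
  by apply/matrixP=> i j; rewrite !mxE.
have /orthomx_spectralP eA : A \is normalmx by apply/normalmxP; rewrite -adjE_sesqui hA.
set P := spectralmx A in eA; set d := spectral_diag A in eA.
have PP : P *m adj P = 1%:M by rewrite adjE_sesqui; apply/unitarymxP/spectral_unitarymx.
rewrite invmx_unitary ?spectral_unitarymx // -adjE_sesqui in eA.
have d_ge0 i : 0 <= d 0 i.
  have := psdA.2 (adj P *m delta_mx i 0); rewrite -/(qform _ _).
  by rewrite eA qform_conj mulmxA PP mul1mx qform_diag_delta.
pose s : 'rV[C]_n := \row_i sqrtC (d 0 i).
exists (adj P *m diag_mx s *m P); split.
  by apply/psd_conj/psd_diag => i; rewrite mxE sqrtC_ge0.
rewrite -!mulmxA [P *m (adj P *m _)]mulmxA PP mul1mx [diag_mx s *m (_ *m _)]mulmxA.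
rewrite mulmx_diag eA -!mulmxA; congr (_ *m (_ *m _)); congr diag_mx.
by apply/rowP=> j; rewrite !mxE -expr2 sqrtCK.
Qed.

Lemma msqrtP n (A : 'M[C]_n) : psd A -> psd (msqrt A) /\ msqrt A *m msqrt A = A.
Proof. by move=> /psd_sqrt_exists; apply: epsilon_spec. Qed.

Lemma psd_eq0 n (A : 'M[C]_n) : psd A -> (forall v, qform A v = 0) -> A = 0.
Proof.
move=> /msqrtP [[hS _] <-] qA; set S := msqrt A in hS qA *.
suff -> : S = 0 by rewrite mul0mx.
apply/matrixP=> i j; have /eqP := qA (delta_mx j 0).
rewrite /qform -{1}hS mulmxA -adj_mul -mulmxA sqnorm_eq0 -colE => /eqP/matrixP/(_ i 0).
by rewrite !mxE.
Qed.

Lemma unitmx_noeig0 n (A : 'M[C]_n) : ~~ eigenvalue A 0 -> A \in unitmx.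
Proof. by rewrite /eigenvalue /eigenspace negbK raddf0 subr0 kermx_eq0 row_free_unit. Qed.

Lemma not_eigenvalue0 n (A : 'M[C]_n) :
  (forall v, v != 0 -> 0 < qform A v) -> ~~ eigenvalue A 0.
Proof.
move=> pA; apply/eigenvalueP => -[u uA0 u0].
have := pA (adj u); rewrite adj_eq0 /qform adjK uA0 scale0r mul0mx mxE ltxx.
by move/(_ u0).
Qed.

Lemma eigenvalue_scalar_sub n (A : 'M[C]_n) a b :
  eigenvalue A a -> eigenvalue (b%:M - A) (b - a).
Proof.
case/eigenvalueP=> u uA u0; apply/eigenvalueP; exists u => //.
by rewrite mulmxBr mul_mx_scalar uA scalerBl.
Qed.

Lemma sum_mxtens (R : nmodType) m p (F : 'I_(m * p) -> R) :
  \sum_k F k = \sum_i \sum_a F (mxtens_index (i, a)).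
Proof.
rewrite pair_big [RHS](reindex (@mxtens_unindex m p)).
  by apply: eq_bigr => k _; rewrite -surjective_pairing mxtens_unindexK.
by exists (@mxtens_index m p) => k _; rewrite (mxtens_indexK, mxtens_unindexK).
Qed.

Lemma sum_pair (R : nmodType) (I J : finType) (F : I * J -> R) :
  \sum_ij F ij = \sum_i \sum_j F (i, j).
Proof. by rewrite pair_bigA; apply: eq_bigr => -[]. Qed.

Fact tensmx_is_linear m n p q (A : 'M[C]_(m, n)) : linear (@tensmx C m n p q A).
Proof. by move=> a B D; apply/matrixP=> i j; rewrite !mxE mulrDr mulrCA. Qed.

HB.instance Definition _ m n p q (A : 'M[C]_(m, n)) :=
  GRing.isLinear.Build C 'M[C]_(p, q) 'M[C]_(m * p, n * q) _ (@tensmx C m n p q A)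
    (@tensmx_is_linear m n p q A).

Lemma tensmxZl m n p q (a : C) (A : 'M[C]_(m, n)) (B : 'M[C]_(p, q)) :
  (a *: A) *t B = a *: (A *t B).
Proof. by apply/matrixP=> i j; rewrite !mxE mulrA. Qed.

Lemma tensmx_suml m n p q (I : finType) (F : I -> 'M[C]_(m, n)) (B : 'M[C]_(p, q)) :
  (\sum_i F i) *t B = \sum_i F i *t B.
Proof.
apply/matrixP=> i j; rewrite !mxE !summxE mulr_suml.
by apply: eq_bigr => k _; rewrite !mxE.
Qed.

Lemma tensmx11 m p : (1%:M : 'M[C]_m) *t (1%:M : 'M[C]_p) = 1%:M.
Proof.
apply/matrixP=> i j; case: (mxtens_indexP i) => i1 i2; case: (mxtens_indexP j) => j1 j2.
rewrite tensmxE !mxE (can_eq (@mxtens_indexK m p)) xpair_eqE.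
by case: (i1 == j1); case: (i2 == j2); rewrite /= ?mulr1 ?mulr0.
Qed.

Lemma mxtrace_tens m p (A : 'M[C]_m) (B : 'M[C]_p) : \tr (A *t B) = \tr A * \tr B.
Proof. by rewrite /mxtrace mulr_sum; apply: eq_bigr => i _; rewrite mxE. Qed.

Lemma mxtrace_delta_diag n (i : 'I_n) : \tr (delta_mx i i : 'M[C]_n) = 1.
Proof. by rewrite /mxtrace (big_only1 i) // => [|j /negPf ji _]; rewrite mxE ?eqxx ?ji. Qed.

Lemma tens1_mulE k p q r (A : 'M[C]_(p, q)) (X : 'M[C]_(k * q, r)) i a c :
  ((1%:M *t A) *m X) (mxtens_index (i, a)) c =
  \sum_b A a b * X (mxtens_index (i, b)) c.
Proof.
rewrite mxE sum_mxtens (big_only1 i) // => [|j ji _]; last first.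
  by rewrite big1 // => b _; rewrite tensmxE mxE eq_sym (negPf ji) mul0r mul0r.
by apply: eq_bigr => b _; rewrite tensmxE mxE eqxx mul1r.
Qed.

Lemma mul_tens1E k p q r (B : 'M[C]_(p, q)) (Y : 'M[C]_(r, k * p)) c j b :
  (Y *m (1%:M *t B)) c (mxtens_index (j, b)) =
  \sum_a Y c (mxtens_index (j, a)) * B a b.
Proof.
rewrite mxE sum_mxtens (big_only1 j) // => [|i ij _]; last first.
  by rewrite big1 // => a _; rewrite tensmxE mxE (negPf ij) mul0r mulr0.
by apply: eq_bigr => a _; rewrite tensmxE mxE eqxx mul1r.
Qed.

Lemma tens_delta_mulE m p (A : 'M[C]_m) (a b : 'I_p) (w : 'cV[C]_(m * p)) i :
  ((A *t delta_mx a b) *m w) (mxtens_index (i, a)) 0 =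
  (A *m \col_k w (mxtens_index (k, b)) 0) i 0.
Proof.
rewrite !mxE sum_mxtens; apply: eq_bigr => k _; rewrite (big_only1 b) // => [|c cb _].
  by rewrite tensmxE !mxE !eqxx mulr1.
by rewrite tensmxE mxE eqxx (negPf cb) mulr0 mul0r.
Qed.

Lemma tens_cVE n m (v : 'cV[C]_n) (u : 'cV[C]_m) i a :
  (v *t u) (mxtens_index (i, a)) 0 = v i 0 * u a 0.
Proof. by rewrite mxE mxtens_indexK !ord1. Qed.

Lemma tens_cV_neq0 n m (v : 'cV[C]_n) (u : 'cV[C]_m) : v != 0 -> u != 0 -> v *t u != 0.
Proof.
case/cV0Pn=> i vi /cV0Pn [a ua]; apply/cV0Pn; exists (mxtens_index (i, a)).
by rewrite tens_cVE mulf_neq0.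
Qed.

Lemma posdef_tens1 n m (A : 'M[C]_m) : posdef A -> posdef (1%:M *t A : 'M[C]_(n * m)).
Proof.
move=> [hA pA]; split=> [|w /cV0Pn [U]]; first by rewrite adj_tens adj1 hA.
case: (mxtens_indexP U) => i a wia; pose w_ k := \col_b w (mxtens_index (k, b)) 0.
have -> : (adj w *m (1%:M *t A) *m w) 0 0 = \sum_k qform A (w_ k).
  rewrite -/(qform _ w) qformE sum_mxtens; apply: eq_bigr => k _.
  rewrite qformE; apply: eq_bigr => b _; rewrite sum_mxtens (big_only1 k) //.
  - by apply: eq_bigr => a' _; rewrite tensmxE !mxE eqxx mul1r.
  - move=> l lk _; rewrite big1 // => a' _.
    by rewrite tensmxE mxE (negPf lk) mul0r mulr0 mul0r.
rewrite (bigD1 i) //= ltr_wpDr ?pA //; last by apply/cV0Pn; exists a; rewrite mxE.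
by apply: sumr_ge0 => k _; apply: (posdef_psd (conj hA pA)).2.
Qed.

Fact ptrace2_is_linear n m : linear (@ptrace2 n m).
Proof.
move=> a A B; apply/matrixP=> i j; rewrite !mxE mulr_sumr -big_split.
by apply: eq_bigr => b _; rewrite !mxE.
Qed.

HB.instance Definition _ n m :=
  GRing.isLinear.Build C 'M[C]_(n * m) 'M[C]_n _ (@ptrace2 n m) (@ptrace2_is_linear n m).

Lemma ptrace2_tens n m (A : 'M[C]_n) (B : 'M[C]_m) : ptrace2 (A *t B) = \tr B *: A.
Proof.
apply/matrixP=> i j; rewrite [RHS]mxE /mxtrace mulr_suml mxE.
by apply: eq_bigr => a _; rewrite tensmxE mulrC.
Qed.

Lemma mulmx_adj_col m p (R : 'M[C]_(m, p)) :
  R *m adj R = \sum_c col c R *m adj (col c R).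
Proof.
apply/matrixP=> a b; rewrite !mxE summxE; apply: eq_bigr => c _.
by rewrite !mxE big_ord1 !mxE.
Qed.

Lemma qform_ptrace2_rank1 n m (sigma : 'M[C]_(n * m)) (u : 'cV[C]_m) (v : 'cV[C]_n) :
  qform (ptrace2 ((1%:M *t (u *m adj u)) *m sigma)) v = qform sigma (v *t u).
Proof.
rewrite !qformE [RHS]sum_mxtens; apply: eq_bigr => j _.
under [RHS]eq_bigr do rewrite sum_mxtens.
rewrite [RHS]exchange_big; apply: eq_bigr => i _.
rewrite mxE mulr_sumr mulr_suml; apply: eq_bigr => a _.
rewrite tens1_mulE mulr_sumr mulr_suml; apply: eq_bigr => b _.
rewrite !tens_cVE !mxE big_ord1 !mxE rmorphM; ring.
Qed.

Lemma qform_ptrace2_tens1_gt0 n m (sigma : 'M[C]_(n * m)) (Z : 'M[C]_m) (v : 'cV[C]_n) :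
  posdef sigma -> psd Z -> Z != 0 -> v != 0 ->
  0 < qform (ptrace2 ((1%:M *t Z) *m sigma)) v.
Proof.
move=> pd_sigma /msqrtP [[hR _] RR] Z0 v0; set R := msqrt Z in hR RR.
have {}RR : Z = \sum_c col c R *m adj (col c R) by rewrite -mulmx_adj_col hR.
have [a [c Rac]] : exists a c, R a c != 0.
  apply/matrix0Pn; apply: contraNneq Z0; rewrite RR => ->.
  by rewrite big1 // => c _; rewrite col0 mul0mx.
rewrite RR linear_sum mulmx_suml linear_sum qform_sum (bigD1 c) //=.
rewrite ltr_wpDr ?qform_ptrace2_rank1 //.
  by apply: sumr_ge0 => i _; rewrite qform_ptrace2_rank1; apply: (posdef_psd pd_sigma).2.
by apply: pd_sigma.2; apply: tens_cV_neq0 => //; apply/cV0Pn; exists a; rewrite mxE.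
Qed.

(* [kraus K] maps [T] to [sum_j K_j^* T K_j]: the [K j] are the adjoints of the
   Kraus operators in the usual convention. *)
Definition kraus (J : finType) p q (K : J -> 'M[C]_(p, q)) (T : 'M[C]_p) : 'M[C]_q :=
  \sum_j adj (K j) *m T *m K j.

Lemma kraus_psd (J : finType) p q (K : J -> 'M[C]_(p, q)) T :
  psd T -> psd (kraus K T).
Proof. by move=> pT; apply: psd_sum => j _; apply: psd_conj. Qed.

Section Kraus.

Variables (J : finType) (p q : nat) (K : J -> 'M[C]_(p, q)).

Lemma kraus_linear : is_linear_map (kraus K).
Proof.
move=> a A B; rewrite /kraus scaler_sumr -big_split; apply: eq_bigr => j _.
by rewrite mulmxDr mulmxDl -scalemxAr -scalemxAl.
Qed.

Lemma ampliation_kraus k (T : 'M[C]_(k * p)) :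
  ampliation k (kraus K) T = kraus (fun j => 1%:M *t K j) T.
Proof.
apply/matrixP=> i j; case: (mxtens_indexP i) => i1 i2; case: (mxtens_indexP j) => j1 j2.
rewrite /ampliation [LHS]mxE !mxtens_indexK /kraus !summxE; apply: eq_bigr => l _.
rewrite adj_tens adj1 mul_tens1E [LHS]mxE; apply: eq_bigr => b _.
rewrite tens1_mulE [in LHS]mxE; congr (_ * _); apply: eq_bigr => a _.
by rewrite [X in _ * X = _]mxE.
Qed.

Lemma kraus_cp : completely_positive (kraus K).
Proof. by move=> k T pT; rewrite ampliation_kraus; apply: kraus_psd. Qed.

Lemma kraus_tp : \sum_j K j *m adj (K j) = 1%:M -> trace_preserving (kraus K).
Proof.
move=> K1 T; rewrite -[in RHS](mul1mx T) -K1 mulmx_suml /kraus !raddf_sum.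
by apply: eq_bigr => j _ /=; rewrite mxtrace_mulC mulmxA.
Qed.

Lemma kraus_channel : \sum_j K j *m adj (K j) = 1%:M -> is_channel (kraus K).
Proof. by move=> K1; split; [exact: kraus_linear | exact: kraus_cp | exact: kraus_tp]. Qed.

Lemma kraus_posdef T :
  (forall w : 'cV[C]_q, w != 0 -> exists j, K j *m w != 0) ->
  posdef T -> posdef (kraus K T).
Proof.
move=> Ksep pdT; have psdT := posdef_psd pdT; have [hK _] := kraus_psd K psdT.
split=> // w /Ksep [j Kjw]; rewrite -/(qform _ w) /kraus qform_sum (bigD1 j) //=.
rewrite ltr_wpDr ?qform_conj ?pdT.2 //; apply: sumr_ge0 => l _.
by rewrite qform_conj; apply: psdT.2.
Qed.

End Kraus.

Definition maximally_mixed k : 'M[C]_k := (k%:R^-1)%:M.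

Lemma maximally_mixed_full_rank k : (0 < k)%N -> full_rank_state (maximally_mixed k).
Proof.
move=> k0; split; first by apply: posdef_scalar; rewrite invr_gt0 ltr0n.
by rewrite mxtrace_scalar -[LHS]mulr_natr mulVf // pnatr_eq0 -lt0n.
Qed.

Lemma full_rank_mixed_tens n m (xi : 'M[C]_m) : (0 < n)%N -> full_rank_state xi ->
  full_rank_state (maximally_mixed n *t xi).
Proof.
move=> n0 [pd_xi tr_xi]; have [pd_mixed tr_mixed] := maximally_mixed_full_rank n0.
split; last by rewrite mxtrace_tens tr_mixed tr_xi mulr1.
rewrite /maximally_mixed -scalemx1 tensmxZl; apply: posdefZ; last exact: posdef_tens1.
by rewrite invr_gt0 ltr0n.
Qed.

Lemma observable_psd (X : finType) n (E : X -> 'M[C]_n) x : observable E -> psd (E x).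
Proof. by case=> _ /(_ x) []. Qed.

Lemma observable_neq1 (X : finType) n (E : X -> 'M[C]_n) x :
  observable E -> nontrivial_obs E -> E x != 1%:M.
Proof.
move=> obsE [x0 Ex0_nscalar]; apply/eqP => Ex1.
have x0x : x0 != x by apply: contra_neq (Ex0_nscalar 1) => ->; rewrite Ex1.
have [E_neq0 _ sumE] := obsE.
have rest0 : \sum_(y | y != x) E y = 0.
  by move: sumE; rewrite (bigD1 x) // Ex1 -[RHS]addr0 => /addrI.
have : E x0 = 0.
  apply: psd_eq0 => [|v]; first exact: observable_psd.
  have hs : \sum_(y | y != x) qform (E y) v = 0.
    by rewrite -qform_sum rest0 /qform mulmx0 mul0mx mxE.
  by apply: (psumr_eq0P _ hs x0x) => y _; apply: (observable_psd _ obsE).2.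
by move/eqP; apply/negP: (E_neq0 x0).
Qed.

Section LudersScheme.

Variables (X : finType) (n : nat) (E : X -> 'M[C]_n).
Hypothesis obsE : observable E.

Let sqrtE x := msqrt (E x).

Lemma adj_sqrt_effect x : adj (sqrtE x) = sqrtE x.
Proof. by have [_ /(_ x) [/msqrtP [[]]]] := obsE. Qed.

Lemma sqrt_effectK x : sqrtE x *m sqrtE x = E x.
Proof. by have [_ /(_ x) [/msqrtP []]] := obsE. Qed.

Definition pointer (x : X) : 'M[C]_#|X| := delta_mx (enum_rank x) (enum_rank x).

Definition luders_kraus (xa : X * 'I_#|X|) : 'M[C]_(n * #|X|) :=
  sqrtE xa.1 *t delta_mx xa.2 (enum_rank xa.1).

Definition luders_scheme : scheme n X :=
  Scheme (maximally_mixed #|X|) (kraus luders_kraus) pointer.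

Lemma sum_pointer : \sum_x pointer x = 1%:M.
Proof.
rewrite (reindex _ (onW_bij _ (@enum_val_bij X))) mx1_sum_delta.
by apply: eq_bigr => i _; rewrite /pointer enum_valK.
Qed.

Lemma luders_kraus_unital : \sum_xa luders_kraus xa *m adj (luders_kraus xa) = 1%:M.
Proof.
have [_ _ sumE] := obsE; rewrite -(tensmx11 n #|X|) -sumE tensmx_suml sum_pair.
apply: eq_bigr => x _; rewrite mx1_sum_delta linear_sum /=; apply: eq_bigr => a _.
by rewrite adj_tens adj_sqrt_effect adj_delta tensmx_mul sqrt_effectK mul_delta_mx.
Qed.

Lemma luders_scheme_implements : (0 < #|X|)%N -> implements luders_scheme (luders E).
Proof.
move=> X0 x rho; rewrite /scheme_instrument /= /kraus /maximally_mixed.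
set c : C := #|X|%:R^-1.
have term xa : adj (luders_kraus xa) *m (rho *t c%:M) *m luders_kraus xa =
    luders E xa.1 rho *t (c *: pointer xa.1).
  rewrite adj_tens adj_sqrt_effect adj_delta !tensmx_mul.
  by rewrite mul_mx_scalar -scalemxAl mul_delta_mx.
under eq_bigr do rewrite term.
rewrite mulmx_sumr linear_sum sum_pair /=.
under eq_bigr => y _ do under eq_bigr => a _ do
  rewrite tensmx_mul mul1mx ptrace2_tens -scalemxAr mxtraceZ.
rewrite (@big_only1 'M[C]_n 0 +%R X x) // => [|y yx _]; last first.
  apply: big1 => a _; rewrite mul_delta_mx_0 ?mxtrace0 ?mulr0 ?scale0r //.
  by rewrite (inj_eq enum_rank_inj) eq_sym.
rewrite (@sumr_const 'M[C]_n) card_ord /pointer mul_delta_mx mxtrace_delta_diag mulr1.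
by rewrite scalerMnl -[c *+ _]mulr_natr mulVf ?scale1r // pnatr_eq0 -lt0n.
Qed.

Hypothesis unsharpE : completely_unsharp E.

Lemma luders_kraus_separating (w : 'cV[C]_(n * #|X|)) :
  w != 0 -> exists xa, luders_kraus xa *m w != 0.
Proof.
case/cV0Pn => U; case: (mxtens_indexP U) => i b wib.
pose wb := \col_k w (mxtens_index (k, b)) 0.
have wb_neq0 : wb != 0 by apply/cV0Pn; exists i; rewrite mxE.
have uS : sqrtE (enum_val b) \in unitmx.
  have := unitmx_noeig0 (unsharpE (enum_val b)).1.
  by rewrite -sqrt_effectK unitmx_mul => /andP [].
exists (enum_val b, b); apply: contraNneq wb_neq0 => Kw0.
have : sqrtE (enum_val b) *m wb = 0.
  apply/matrixP => k j; rewrite [j]ord1 -(tens_delta_mulE _ b b w).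
  by rewrite -[X in delta_mx _ X]enum_valK Kw0 !mxE.
by move/(congr1 (mulmx (invmx (sqrtE (enum_val b))))); rewrite mulKmx // mulmx0 => ->.
Qed.

Lemma luders_scheme_third_law : (0 < #|X|)%N -> third_law_scheme luders_scheme.
Proof.
move=> X0; have [pd_mixed tr_mixed] := maximally_mixed_full_rank X0.
have chan := kraus_channel luders_kraus_unital; have [_ _ tp] := chan.
split=> //.
- split=> //; last exact: sum_pointer.
  + by split=> //; apply: posdef_psd.
  + by move=> x; apply: psd_delta.
- split=> // rho [pd_rho tr_rho]; split; last by rewrite tp.
  exact: kraus_posdef luders_kraus_separating pd_rho.
Qed.

End LudersScheme.

Section Necessity.

Variables (X : finType) (n : nat) (E : X -> 'M[C]_n) (S : scheme n X).
Hypotheses (obsE : observable E) (n_gt0 : (0 < n)%N).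
Hypotheses (thirdS : third_law_scheme S) (implS : implements S (luders E)).

Let c : C := n%:R^-1.
Let sigma := chan S (maximally_mixed n *t xi S).

Lemma scheme_output_posdef : posdef sigma.
Proof.
have [_ full_xi [_ fullS]] := thirdS.
by have [] := fullS _ (full_rank_mixed_tens n_gt0 full_xi).
Qed.

Lemma ptrace2_pointer y : ptrace2 ((1%:M *t Defs.Zp S y) *m sigma) = c *: E y.
Proof.
have := implS y (maximally_mixed n); rewrite /scheme_instrument => ->.
have [_ /(_ y) [/msqrtP [_ SS] _] _] := obsE.
by rewrite /luders mul_mx_scalar -scalemxAl SS.
Qed.

Lemma ptrace2_pointer_compl x :
  ptrace2 ((1%:M *t (1%:M - Defs.Zp S x)) *m sigma) = c *: (1%:M - E x).
Proof.
have [[_ _ _ sumZ] _ _] := thirdS; have [_ _ sumE] := obsE.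
rewrite -[in RHS]sumE -sumZ !linearB mulmxBl !linearB /=.
rewrite !linear_sum mulmx_suml !linear_sum /=.
by under eq_bigr do rewrite ptrace2_pointer; rewrite ptrace2_pointer.
Qed.

Lemma induced_effect_noeig0 (Z : 'M[C]_(dimA S)) (B : 'M[C]_n) :
  psd Z -> ptrace2 ((1%:M *t Z) *m sigma) = c *: B -> B != 0 -> ~~ eigenvalue B 0.
Proof.
have c_gt0 : 0 < c by rewrite invr_gt0 ltr0n.
move=> pZ ZB B0; apply: not_eigenvalue0 => v v0.
have Z0 : Z != 0.
  apply: contraNneq B0 => Z0; move: ZB; rewrite Z0 tensmx0 mul0mx linear0 => /esym/eqP.
  by rewrite scaler_eq0 gt_eqF //= => /eqP.
have := qform_ptrace2_tens1_gt0 scheme_output_posdef pZ Z0 v0.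
by rewrite ZB qformZ pmulr_rgt0.
Qed.

Lemma third_law_luders_unsharp : nontrivial_obs E -> completely_unsharp E.
Proof.
move=> ntE x; have [[_ _ psdZ sumZ] _ _] := thirdS; have [E_neq0 _ _] := obsE.
split; first exact: induced_effect_noeig0 (psdZ x) (ptrace2_pointer x) (E_neq0 x).
apply/negP => /(eigenvalue_scalar_sub 1); rewrite subrr; apply/negP.
apply: induced_effect_noeig0 (ptrace2_pointer_compl x) _; last first.
  by rewrite subr_eq0 eq_sym observable_neq1.
rewrite -sumZ (bigD1 x) //= addrAC subrr add0r.
by apply: psd_sum => y _; apply: psdZ.
Qed.

End Necessity.

Unset Implicit Arguments.

Theorem mainTheorem12 (X : finType) (n : nat) (E : X -> 'M[C]_n) :
  (2 <= n)%N -> observable E -> nontrivial_obs E ->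
  ((exists S : scheme n X, third_law_scheme S /\ implements S (luders E))
   <-> completely_unsharp E).
Proof.
move=> n_ge2 obsE ntE; split=> [[S [thirdS implS]] | unsharpE].
  exact: third_law_luders_unsharp obsE (ltnW n_ge2) thirdS implS ntE.
have X_gt0 : (0 < #|X|)%N by case: ntE => x _; apply/card_gt0P; exists x.
exists (luders_scheme E); split.
  exact: luders_scheme_third_law.
exact: luders_scheme_implements.
Qed.
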